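(* Let $n$ be a positive integer, let $\lambda$ be a partition with at most $n$ nonzero parts, and let $\beta$ be a nonzero complex number. Then $$G_\lambda(\beta,\beta,\dots,\beta\mid -\beta^{-1})=\beta^{|\lambda|},$$ where all $n$ variables are specialized to $\beta$.
   Context: A partition $\lambda$ is identified with its Young diagram $\{(i,j)\in\mathbb{Z}_{>0}^2 : j\le\lambda_i\}$ and $|\lambda|=\sum_i\lambda_i$. A set-valued tableau of shape $\lambda$ with entries in $[n]=\{1,\dots,n\}$ assigns a non-empty subset $T_{i,j}\subseteq[n]$ to each box $(i,j)\in\lambda$ such that $\max T_{i,j}\le\min T_{i,j+1}$ whenever $(i,j),(i,j+1)\in\lambda$ and $\max T_{i,j}<\min T_{i+1,j}$ whenever $(i,j),(i+1,j)\in\lambda$; $\mathrm{SVT}(\lambda,n)$ is the set of these. For such $T$, $|T|=\sum_{(i,j)}|T_{i,j}|$, $\omega_k(T)$ is the number of boxes whose set contains $k$, and $x^{\omega(T)}=\prod_{k=1}^n x_k^{\omega_k(T)}$. The stable Grothendieck polynomial is $G_\lambda(x_1,\dots,x_n\mid\beta)=\sum_{T\in\mathrm{SVT}(\lambda,n)}\beta^{|T|-|\lambda|}x^{\omega(T)}$. *)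

From HB Require Import structures.
From mathcomp Require Import all_boot all_order all_algebra.
From mathcomp Require Import reals complex.
Set Implicit Arguments. Unset Strict Implicit. Unset Printing Implicit Defensive.
Import Order.TTheory GRing.Theory Num.Theory.
Local Open Scope ring_scope.

(* A partition is a nonincreasing sequence of naturals (trailing zeros
   allowed; they do not change the Young diagram).  Rows and columns are
   0-indexed here: box (i,j) belongs to the diagram iff i < size la and
   j < la_i.  Entries k : 'I_n stand for the integer k+1 of [n]. *)
Definition is_partition (la : seq nat) : bool := sorted geq la.

Definition nparts (la : seq nat) : nat := count (fun x => 0 < x)%N la.

Definition psize (la : seq nat) : nat := sumn la.

Definition nrows (la : seq nat) : nat := size la.
Definition ncols (la : seq nat) : nat := \max_(x <- la) x.

Definition box (la : seq nat) := ('I_(nrows la) * 'I_(ncols la))%type.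

Definition in_diagram (la : seq nat) (b : box la) : bool :=
  (b.2 < nth 0 la b.1)%N.

Definition filling (la : seq nat) (n : nat) := {ffun box la -> {set 'I_n}}.

(* T is a set-valued tableau of shape la with entries in [n]:
   boxes outside the diagram carry the empty set (so fillings are in
   bijection with set-valued tableaux), boxes inside carry nonempty sets,
   rows weakly increase (max T(i,j) <= min T(i,j+1)) and columns strictly
   increase (max T(i,j) < min T(i+1,j)). *)
Definition is_svt (la : seq nat) (n : nat) (T : filling la n) : bool :=
  [forall b : box la, (~~ in_diagram b) ==> (T b == set0)] &&
  [forall b : box la, in_diagram b ==> (T b != set0)] &&
  [forall b : box la, forall b' : box la,
     [&& in_diagram b, in_diagram b' & (b'.1 == b.1 :> nat) && (b'.2 == b.2.+1 :> nat)]
     ==> [forall a in T b, forall c in T b', (a <= c)%N]] &&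
  [forall b : box la, forall b' : box la,
     [&& in_diagram b, in_diagram b' & (b'.1 == b.1.+1 :> nat) && (b'.2 == b.2 :> nat)]
     ==> [forall a in T b, forall c in T b', (a < c)%N]].

Definition SVT (la : seq nat) (n : nat) : {set filling la n} :=
  [set T | is_svt T].

Definition svt_size (la : seq nat) (n : nat) (T : filling la n) : nat :=
  \sum_(b : box la) #|T b|.

Definition svt_weight (la : seq nat) (n : nat) (T : filling la n) (k : 'I_n) : nat :=
  #|[set b : box la | k \in T b]|.

Definition Groth (R : comRingType) (la : seq nat) (n : nat)
    (x : 'I_n -> R) (beta : R) : R :=
  \sum_(T in SVT la n)
     beta ^+ (svt_size T - psize la) * \prod_(k < n) x k ^+ svt_weight T k.

From HB Require Import structures.
From mathcomp Require Import all_boot all_order all_algebra.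
From mathcomp Require Import reals complex.
From mathcomp Require Import zify.
Import Order.TTheory GRing.Theory Num.Theory.
Set Implicit Arguments. Unset Strict Implicit. Unset Printing Implicit Defensive.

(* With every x_k equal to beta and parameter -1/beta, the tableau T
   contributes beta^|la| (-1)^(|T| - |la|), so it suffices to show that the
   signed count of set-valued tableaux is 1.  Filling every box of row i with
   {i} gives a tableau R, valid because la has at most n rows.  For T <> R,
   let b be the first box in reading order with T b <> {row b}, and toggle
   the entry row b in T b.  Since all earlier boxes agree with R, every entry
   of T b is at least row b, so the result is again a tableau, with the same
   first box b; this is a sign-reversing involution of SVT minus R. *)

Lemma sum_sign_reversing_involution (V : zmodType) (I : finType) (A : {set I})
    (g : I -> I) (f : I -> V) :
  {in A, forall x, g x \in A} -> {in A, involutive g} ->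
  {in A, forall x, g x != x} -> {in A, forall x, f (g x) = - f x}%R ->
  (\sum_(x in A) f x = 0)%R.
Proof.
elim: {A}_.+1 {-2}A (ltnSn #|A|) => // m IH A leAm gA gK gx_neq fg.
have [->|[x Ax]] := set_0Vmem A; first by rewrite big_set0.
have gxA : g x \in A :\ x by rewrite !inE gx_neq ?gA.
rewrite (big_setD1 x) // (big_setD1 (g x)) //= fg // addrA subrr add0r.
have sub_A : {in A :\ x :\ g x, forall y, y \in A}.
  by move=> y; rewrite !inE => /and3P[].
apply: IH => [|y yB|y yB|y yB|y yB]; last 3 first.
- exact/gK/sub_A.
- exact/gx_neq/sub_A.
- exact/fg/sub_A.
- have ltBA : #|A :\ x :\ g x| < #|A|.
    exact: leq_ltn_trans (subset_leq_card (subD1set _ _)) (proper_card (properD1 Ax)).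
  by rewrite -ltnS (leq_trans _ leAm) // ltnS.
- move: yB; rewrite !inE => /and3P[y_neq_gx y_neq_x Ay].
  rewrite gA // andbT; apply/andP; split.
  + by apply: contra y_neq_x => /eqP/(congr1 g); rewrite gK // gK // => ->.
  + by apply: contra y_neq_gx => /eqP <-; rewrite gK.
Qed.

Definition toggle (T : finType) (A : {set T}) (k : T) : {set T} :=
  if k \in A then A :\ k else k |: A.

Section Toggle.
Variables (T : finType) (A : {set T}) (k : T).

Lemma toggleK : toggle (toggle A k) k = A.
Proof.
rewrite {2}/toggle; case: ifP => kA.
- by rewrite /toggle setD11 setD1K.
- by rewrite /toggle setU11 setU1K // kA.
Qed.

Lemma toggle_subset x : x \in toggle A k -> (x \in A) || (x == k).
Proof.
rewrite /toggle; case: ifP => _; rewrite !inE; first by case/andP => _ ->.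
by rewrite orbC.
Qed.

Lemma toggle_neq0 : A != set0 -> A != [set k] -> toggle A k != set0.
Proof.
rewrite /toggle => A_neq0 A_neq1; case: ifP => kA.
- apply: contra A_neq1 => /eqP Ak0.
  by rewrite eqEsubset sub1set kA andbT -setD_eq0 Ak0.
- by apply/set0Pn; exists k; rewrite setU11.
Qed.

Lemma toggle_neq1 : A != set0 -> toggle A k != [set k].
Proof.
rewrite /toggle => /set0Pn[x xA]; case: ifP => kA; apply/eqP => Ak.
- by have := set11 k; rewrite -Ak !inE eqxx.
- have : x \in k |: A by rewrite setU1r.
  by rewrite Ak inE => /eqP xk; rewrite -xk xA in kA.
Qed.

Lemma odd_card_toggle : odd #|toggle A k| = ~~ odd #|A|.
Proof.
rewrite /toggle; case: ifP => kA; last by rewrite cardsU1 kA.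
by rewrite [in RHS](cardsD1 k A) kA add1n /= negbK.
Qed.

End Toggle.

Lemma partition_nth_le (la : seq nat) i j :
  is_partition la -> (i <= j)%N -> (j < size la)%N -> (nth 0 la j <= nth 0 la i)%N.
Proof.
move=> la_part le_ij lt_j; apply: (sorted_leq_nth _ _ 0 la_part) => //.
- by move=> a b c /= ba cb; apply: leq_trans cb ba.
- by move=> a; rewrite /= leqnn.
- by rewrite inE (leq_ltn_trans le_ij).
Qed.

Lemma diagram_row_lt_nparts (la : seq nat) (b : box la) :
  is_partition la -> in_diagram b -> (b.1 < nparts la)%N.
Proof.
case: b => [[i lt_i] [j lt_j]]; rewrite /in_diagram /= => la_part ij_diag.
rewrite /nparts -(cat_take_drop i.+1 la) count_cat.
suff -> : count (fun x => 0 < x)%N (take i.+1 la) = i.+1 by apply: leq_addr.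
rewrite -[RHS](size_takel lt_i); apply/eqP; rewrite -all_count.
apply/(all_nthP 0) => k; rewrite size_takel // => lt_k.
rewrite nth_take // (leq_trans _ (partition_nth_le la_part _ lt_i)) //.
exact: leq_ltn_trans (leq0n j) ij_diag.
Qed.

Lemma sum_ord_lt c m : \sum_(j < c) (j < m : nat) = minn m c.
Proof.
elim: c => [|c IH]; first by rewrite big_ord0 minn0.
by rewrite big_ord_recr /= IH; case: (ltnP c m) => /=; lia.
Qed.

Section SetValuedTableaux.
Local Open Scope nat_scope.
Variables (la : seq nat) (n : nat).
Implicit Types (T : filling la n) (b : box la).

Lemma svt_outside T b : T \in SVT la n -> ~~ in_diagram b -> T b = set0.
Proof.
rewrite inE => /andP[/andP[/andP[/forallP out _] _] _] b_out.
by apply/eqP; move/implyP: (out b); apply.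
Qed.

Lemma svt_neq0 T b : T \in SVT la n -> in_diagram b -> T b != set0.
Proof.
rewrite inE => /andP[/andP[/andP[_ /forallP inside] _] _] b_in.
by move/implyP: (inside b); apply.
Qed.

Lemma svt_row_le T b b' a c : T \in SVT la n -> in_diagram b -> in_diagram b' ->
  b'.1 = b.1 :> nat -> b'.2 = b.2.+1 :> nat -> a \in T b -> c \in T b' -> (a <= c)%N.
Proof.
rewrite inE => /andP[/andP[_ /forallP rows] _] b_in b'_in e1 e2 aT cT.
move/forallP/(_ b')/implyP: (rows b); rewrite b_in b'_in e1 e2 !eqxx => /(_ isT).
by move/forall_inP/(_ a aT)/forall_inP/(_ c cT).
Qed.

Lemma svt_col_lt T b b' a c : T \in SVT la n -> in_diagram b -> in_diagram b' ->
  b'.1 = b.1.+1 :> nat -> b'.2 = b.2 :> nat -> a \in T b -> c \in T b' -> (a < c)%N.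
Proof.
rewrite inE => /andP[_ /forallP cols] b_in b'_in e1 e2 aT cT.
move/forallP/(_ b')/implyP: (cols b); rewrite b_in b'_in e1 e2 !eqxx => /(_ isT).
by move/forall_inP/(_ a aT)/forall_inP/(_ c cT).
Qed.

Lemma svtI T :
  (forall b, ~~ in_diagram b -> T b = set0) ->
  (forall b, in_diagram b -> T b != set0) ->
  (forall b b' a c, in_diagram b -> in_diagram b' ->
     b'.1 = b.1 :> nat -> b'.2 = b.2.+1 :> nat -> a \in T b -> c \in T b' -> (a <= c)%N) ->
  (forall b b' a c, in_diagram b -> in_diagram b' ->
     b'.1 = b.1.+1 :> nat -> b'.2 = b.2 :> nat -> a \in T b -> c \in T b' -> (a < c)%N) ->
  T \in SVT la n.
Proof.
move=> out inside rows cols; rewrite inE /is_svt.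
rewrite -!andbA; apply/and4P; split.
- by apply/forallP => b; apply/implyP => /out ->.
- by apply/forallP => b; apply/implyP => /inside.
- apply/forallP => b; apply/forallP => b'.
  apply/implyP => /and3P[b_in b'_in /andP[/eqP e1 /eqP e2]].
  by apply/forall_inP => a aT; apply/forall_inP => c cT; apply: (rows b b').
- apply/forallP => b; apply/forallP => b'.
  apply/implyP => /and3P[b_in b'_in /andP[/eqP e1 /eqP e2]].
  by apply/forall_inP => a aT; apply/forall_inP => c cT; apply: (cols b b').
Qed.

Lemma sum_svt_weight T : \sum_(k < n) svt_weight T k = svt_size T.
Proof.
rewrite /svt_weight /svt_size.
under eq_bigr do rewrite -sum1dep_card big_mkcond.
rewrite exchange_big; apply: eq_bigr => b _.
by rewrite -big_mkcond sum1_card.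
Qed.

Lemma sum_in_diagram : \sum_(b : box la) (in_diagram b : nat) = psize la.
Proof.
rewrite -(pair_bigA _ (fun (i : 'I_(nrows la)) (j : 'I_(ncols la)) => (j < nth 0 la i)%N : nat)) /=.
rewrite /psize sumnE (big_nth 0) big_mkord; apply: eq_bigr => i _.
rewrite sum_ord_lt; apply/minn_idPl.
by apply: leq_bigmax_seq => //; apply: mem_nth.
Qed.

Lemma svt_size_ge T : T \in SVT la n -> psize la <= svt_size T.
Proof.
move=> T_svt; rewrite -sum_in_diagram /svt_size; apply: leq_sum => b _.
by case: (boolP (in_diagram b)) => //= b_in; rewrite card_gt0 svt_neq0.
Qed.

End SetValuedTableaux.

Section SignReversingInvolution.
Local Open Scope nat_scope.
Variables (n : nat) (la : seq nat).
Hypotheses (n_gt0 : 0 < n) (la_partition : is_partition la) (nparts_le : nparts la <= n).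
Implicit Types (T : filling la n) (b : box la) (S : {set box la}).

Definition row_label b : 'I_n := insubd (Ordinal n_gt0) (b.1 : nat).

Lemma row_labelE b : in_diagram b -> row_label b = b.1 :> nat.
Proof.
move=> b_in; rewrite val_insubd.
by rewrite (leq_trans (diagram_row_lt_nparts la_partition b_in)).
Qed.

Definition row_tableau : filling la n :=
  [ffun b => if in_diagram b then [set row_label b] else set0].

Lemma row_tableau_svt : row_tableau \in SVT la n.
Proof.
apply: svtI => [b b_out|b b_in|b b' a c b_in b'_in e1 _|b b' a c b_in b'_in e1 _].
- by rewrite ffunE (negbTE b_out).
- by rewrite ffunE b_in; apply/set0Pn; exists (row_label b); rewrite set11.
- by rewrite !ffunE b_in b'_in !inE => /eqP -> /eqP ->; rewrite !row_labelE // e1.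
- by rewrite !ffunE b_in b'_in !inE => /eqP -> /eqP ->; rewrite !row_labelE // e1.
Qed.

Lemma svt_size_row_tableau : svt_size row_tableau = psize la.
Proof.
rewrite -sum_in_diagram /svt_size; apply: eq_bigr => b _; rewrite ffunE.
by case: ifP; rewrite ?cards1 ?cards0.
Qed.

Definition reading_index b : nat := b.1 * ncols la + b.2.

Lemma reading_index_right b b' :
  b'.1 = b.1 :> nat -> b'.2 = b.2.+1 :> nat -> reading_index b < reading_index b'.
Proof. by move=> e1 e2; rewrite /reading_index e1 e2 addnS. Qed.

Lemma reading_index_below b b' :
  b'.1 = b.1.+1 :> nat -> b'.2 = b.2 :> nat -> reading_index b < reading_index b'.
Proof. by move=> e1 e2; rewrite /reading_index e1 e2 mulSn; have := ltn_ord b.2; lia. Qed.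

Definition first_box S : option (box la) :=
  [pick b in S | [forall b', (b' \in S) ==> (reading_index b <= reading_index b')]].

Lemma first_box_Some S b : first_box S = Some b ->
  b \in S /\ {in S, forall b', reading_index b <= reading_index b'}.
Proof.
rewrite /first_box; case: pickP => // b0 /andP[b0S /forallP b0_min] [<-].
by split=> // b' b'S; move/implyP: (b0_min b'); apply.
Qed.

Lemma first_box_None S : first_box S = None -> S = set0.
Proof.
rewrite /first_box; case: pickP => // no_min _; apply/setP => b0; rewrite inE.
apply/negbTE/negP => b0S; have [b bS b_min] := arg_minnP reading_index b0S.
have /negP := no_min b; apply; apply/andP; split=> //.
apply/forallP => b'; exact/implyP/b_min.
Qed.

Definition misfilled T : {set box la} :=
  [set b | in_diagram b && (T b != [set row_label b])].

Lemma misfilled_eq0 T : T \in SVT la n -> misfilled T = set0 -> T = row_tableau.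
Proof.
move=> T_svt T_ok; apply/ffunP => b; rewrite ffunE; case: ifP => b_in.
- have : b \notin misfilled T by rewrite T_ok in_set0.
  by rewrite inE b_in negbK => /eqP.
- by rewrite svt_outside ?b_in.
Qed.

Lemma misfilled_row_tableau : misfilled row_tableau = set0.
Proof. by apply/setP => b; rewrite !inE ffunE; case: ifP; rewrite ?eqxx. Qed.

Lemma before_first_misfilled T b b' : first_box (misfilled T) = Some b ->
  in_diagram b' -> reading_index b' < reading_index b -> T b' = [set row_label b'].
Proof.
case/first_box_Some => _ b_min b'_in; apply: contraTeq; rewrite -leqNgt => T_b'.
by apply: b_min; rewrite inE b'_in.
Qed.

(* Column strictness against the box above b, which still holds {b.1 - 1}. *)
Lemma first_misfilled_ge_row T b a : T \in SVT la n ->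
  first_box (misfilled T) = Some b -> a \in T b -> b.1 <= a.
Proof.
move=> T_svt first_b aT; have [+ _] := first_box_Some first_b.
rewrite inE => /andP[b_in _]; case E: (b.1 : nat) => [|i] //.
have lt_i : i < nrows la by rewrite (leq_ltn_trans _ (ltn_ord b.1)) // E.
pose u : box la := (Ordinal lt_i, b.2).
have e1 : (b.1 : nat) = u.1.+1 by rewrite E.
have u_in : in_diagram u.
  apply: leq_trans b_in (partition_nth_le la_partition _ _) => //=.
  by rewrite E.
have Tu := before_first_misfilled first_b u_in (reading_index_below e1 erefl).
have := svt_col_lt T_svt u_in b_in e1 erefl _ aT.
by rewrite Tu => /(_ _ (set11 _)); rewrite row_labelE.
Qed.

Definition toggle_at T b : filling la n :=
  [ffun b' => if b' == b then toggle (T b) (row_label b) else T b'].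

Lemma toggle_at_svt T b : T \in SVT la n -> first_box (misfilled T) = Some b ->
  toggle_at T b \in SVT la n.
Proof.
move=> T_svt first_b; have [+ _] := first_box_Some first_b.
rewrite inE => /andP[b_in Tb_neq1].
have Tb_neq0 := svt_neq0 T_svt b_in.
have [a0 a0T] := set0Pn _ Tb_neq0.
have before := before_first_misfilled first_b.
have ge_row := first_misfilled_ge_row T_svt first_b.
apply: svtI => [b' b'_out|b' b'_in|b1 b2 a c b1_in b2_in e1 e2|b1 b2 a c b1_in b2_in e1 e2];
  rewrite !ffunE.
- by case: (eqVneq b' b) => [eb|_]; [rewrite eb b_in in b'_out | exact: svt_outside].
- by case: (eqVneq b' b) => _; [exact: toggle_neq0 | exact: svt_neq0].
- case: (eqVneq b1 b) => [eb1|_]; case: (eqVneq b2 b) => [eb2|_].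
  + by move: e2; rewrite eb1 eb2; lia.
  + rewrite eb1 in b1_in e1 e2 *.
    move=> /toggle_subset/orP[aT|/eqP->] cT; first exact: (svt_row_le T_svt b1_in b2_in e1 e2).
    by rewrite row_labelE // (leq_trans (ge_row _ a0T)) // (svt_row_le T_svt b_in b2_in e1 e2 a0T).
  + rewrite eb2 in b2_in e1 e2 *.
    move=> aT /toggle_subset/orP[cT|/eqP->]; first exact: (svt_row_le T_svt b1_in b2_in e1 e2).
    by move: aT; rewrite before ?reading_index_right // inE => /eqP->; rewrite !row_labelE // e1.
  + exact: svt_row_le.
- case: (eqVneq b1 b) => [eb1|_]; case: (eqVneq b2 b) => [eb2|_].
  + by move: e1; rewrite eb1 eb2; lia.
  + rewrite eb1 in b1_in e1 e2 *.
    move=> /toggle_subset/orP[aT|/eqP->] cT; first exact: (svt_col_lt T_svt b1_in b2_in e1 e2).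
    by rewrite row_labelE // (leq_ltn_trans (ge_row _ a0T)) // (svt_col_lt T_svt b_in b2_in e1 e2 a0T).
  + rewrite eb2 in b2_in e1 e2 *.
    move=> aT /toggle_subset/orP[cT|/eqP->]; first exact: (svt_col_lt T_svt b1_in b2_in e1 e2).
    by move: aT; rewrite before ?reading_index_below // inE => /eqP->; rewrite !row_labelE // e1.
  + exact: svt_col_lt.
Qed.

Lemma misfilled_toggle_at T b : T \in SVT la n -> b \in misfilled T ->
  misfilled (toggle_at T b) = misfilled T.
Proof.
move=> T_svt b_bad; apply/setP => b'; rewrite !inE ffunE.
case: (eqVneq b' b) => [->|_] //; move: b_bad; rewrite inE => /andP[b_in ->].
by rewrite b_in toggle_neq1 // svt_neq0.
Qed.

Lemma odd_svt_size_toggle_at T b :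
  odd (svt_size (toggle_at T b)) = ~~ odd (svt_size T).
Proof.
rewrite /svt_size (bigD1 b) //= [in RHS](bigD1 b) //= ffunE eqxx !oddD odd_card_toggle.
rewrite addNb (eq_bigr (fun b' => #|T b'|)) // => b' /negbTE b'_neq_b.
by rewrite ffunE b'_neq_b.
Qed.

Definition toggle_first_misfilled T : filling la n :=
  if first_box (misfilled T) is Some b then toggle_at T b else T.

Lemma toggle_first_misfilledE T : T \in SVT la n :\ row_tableau ->
  exists2 b, first_box (misfilled T) = Some b & toggle_first_misfilled T = toggle_at T b.
Proof.
rewrite in_setD1 => /andP[T_neq T_svt]; rewrite /toggle_first_misfilled.
case first_T: first_box => [b|]; first by exists b.
by rewrite (misfilled_eq0 T_svt (first_box_None first_T)) eqxx in T_neq.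
Qed.

Lemma toggle_first_misfilled_in T : T \in SVT la n :\ row_tableau ->
  toggle_first_misfilled T \in SVT la n :\ row_tableau.
Proof.
move=> T_A; have [b first_b ->] := toggle_first_misfilledE T_A.
move: T_A; rewrite in_setD1 => /andP[_ T_svt]; rewrite in_setD1 toggle_at_svt // andbT.
have [b_bad _] := first_box_Some first_b.
apply: contraTneq (b_bad) => T'_eq.
by rewrite -(misfilled_toggle_at T_svt b_bad) T'_eq misfilled_row_tableau in_set0.
Qed.

Lemma toggle_first_misfilledK :
  {in SVT la n :\ row_tableau, involutive toggle_first_misfilled}.
Proof.
move=> T T_A; have [b first_b ->] := toggle_first_misfilledE T_A.
move: T_A; rewrite in_setD1 => /andP[_ T_svt]; have [b_bad _] := first_box_Some first_b.
rewrite /toggle_first_misfilled misfilled_toggle_at // first_b.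
by apply/ffunP => b'; rewrite !ffunE; case: eqP => [->|]; rewrite ?eqxx ?toggleK.
Qed.

Lemma odd_svt_size_toggle_first_misfilled T : T \in SVT la n :\ row_tableau ->
  odd (svt_size (toggle_first_misfilled T)) = ~~ odd (svt_size T).
Proof.
by case/toggle_first_misfilledE => b _ ->; rewrite odd_svt_size_toggle_at.
Qed.

Lemma signed_svt_count (R : pzRingType) :
  (\sum_(T in SVT la n) (-1 : R) ^+ (svt_size T - psize la) = 1)%R.
Proof.
rewrite (big_setD1 row_tableau) ?row_tableau_svt //= svt_size_row_tableau subnn expr0.
rewrite (sum_sign_reversing_involution (g := toggle_first_misfilled)) ?addr0 //.
- exact: toggle_first_misfilled_in.
- exact: toggle_first_misfilledK.
- move=> T /odd_svt_size_toggle_first_misfilled odd_T'; apply/eqP => T'_eq.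
  by move: odd_T'; rewrite T'_eq; case: odd.
- move=> T T_A; have T_svt : T \in SVT la n by move: T_A; rewrite in_setD1 => /andP[].
  have T'_svt : toggle_first_misfilled T \in SVT la n.
    by move: (toggle_first_misfilled_in T_A); rewrite in_setD1 => /andP[].
  rewrite -signr_odd -[in RHS]signr_odd !oddB ?svt_size_ge //.
  rewrite odd_svt_size_toggle_first_misfilled //.
  by case: odd; case: odd; rewrite /= ?expr0 ?expr1 ?opprK.
Qed.

Lemma Groth_const_oppV (R : comUnitRingType) (x : R) : x \is a GRing.unit ->
  (Groth la (fun _ : 'I_n => x) (- x^-1) = x ^+ psize la)%R.
Proof.
move=> x_unit; rewrite /Groth.
rewrite (eq_bigr (fun T => x ^+ psize la * (-1) ^+ (svt_size T - psize la)))%R.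
  by rewrite -mulr_sumr signed_svt_count mulr1.
move=> T T_svt; rewrite prodrXr sum_svt_weight -{2}(subnK (svt_size_ge T_svt)).
by rewrite exprD mulrA -exprMn mulNr mulVr // mulrC.
Qed.
End SignReversingInvolution.

Local Open Scope ring_scope.
Local Open Scope complex_scope.

Theorem theoremA1 (R : realType) (n : nat) (la : seq nat) (beta : R[i]) :
  (0 < n)%N -> is_partition la -> (nparts la <= n)%N -> beta != 0 ->
  Groth la (fun _ : 'I_n => beta) (- beta^-1) = beta ^+ psize la.
Proof.
by move=> n_gt0 la_partition nparts_le beta_neq0; rewrite Groth_const_oppV ?unitfE.
Qed.
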